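(* Let $X$ be a nondegenerate random variable with CDF $F$ such that $\mathbb{E}(\min\{X,X'\})$ and $\mathbb{E}(\max\{X,X'\})$ are finite, where $X'$ is an independent copy of $X$. Let $T$ be an absolutely continuous random variable with CDF $F_T$ and the same support as $X$, and let $q_1(u)=q_2(u)=u$, $0\le u\le1$. Then $$\hat G_X(\mathbf q,F_T)=\frac12\,\mathbb{E}\left[F_T(\max\{X,X'\})-F_T(\min\{X,X'\})\right].$$
   Context: The weighted $\mathbf q$-distorted Gini function of $X$ (CDF $F$, survival $\overline F=1-F$), for distortion functions $q_1,q_2$ (increasing maps $[0,1]\to[0,1]$ fixing $0$ and $1$), is $\hat G_X(\mathbf q,F_T)=\int_\Delta q_1(F(x))\,q_2(\overline F(x))\,dF_T(x)$, where $\Delta$ is the non-empty intersection of the supports of $X$ and $T$. *)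

From HB Require Import structures.
From mathcomp Require Import all_boot all_order all_algebra.
From mathcomp Require Import all_classical all_reals all_analysis.
Set Implicit Arguments. Unset Strict Implicit. Unset Printing Implicit Defensive.
Import Order.TTheory GRing.Theory Num.Theory.
Import numFieldNormedType.Exports.
Local Open Scope classical_set_scope.
Local Open Scope ring_scope.

Definition msupp (R : realType) (mu : set R -> \bar R) : set R :=
  [set x | forall e : R, 0 < e -> (0 < mu (ball x e))%E].

Definition rcdf d (Omega : measurableType d) (R : realType)
  (P : probability Omega R) (X : {RV P >-> R}) (x : R) : R := fine (cdf X x).

Definition indep2 d (Omega : measurableType d) (R : realType)
  (P : probability Omega R) (X Y : {RV P >-> R}) : Prop :=
  forall A B : set R, measurable A -> measurable B ->
    P (X @^-1` A `&` Y @^-1` B) = (P (X @^-1` A) * P (Y @^-1` B))%E.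

Definition same_law d (Omega : measurableType d) (R : realType)
  (P : probability Omega R) (X Y : {RV P >-> R}) : Prop :=
  forall A : set R, measurable A -> P (X @^-1` A) = P (Y @^-1` A).

Definition nondegenerate_rv d (Omega : measurableType d) (R : realType)
  (P : probability Omega R) (X : {RV P >-> R}) : Prop :=
  ~ exists c : R, P (X @^-1` [set c]) = 1%E.

Definition gDelta d (Omega : measurableType d) (R : realType)
  (P : probability Omega R) (X T : {RV P >-> R}) : set R :=
  msupp (distribution P X) `&` msupp (distribution P T).

(* Weighted q-distorted Gini function
   \hat G_X(q, F_T) = \int_Delta q1(F(x)) q2(\bar F(x)) dF_T(x),
   the Lebesgue-Stieltjes integral dF_T being integration w.r.t. the law of T. *)
Definition Ghat d (Omega : measurableType d) (R : realType)
  (P : probability Omega R) (q1 q2 : R -> R) (X T : {RV P >-> R}) : \bar R :=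
  (\int[distribution P T]_(x in gDelta X T)
     (q1 (rcdf X x) * q2 (1 - rcdf X x))%:E)%E.

From HB Require Import structures.
From mathcomp Require Import all_boot all_order all_algebra.
From mathcomp Require Import all_classical all_reals all_analysis.
From mathcomp Require Import measurable_realfun ring lra.
Import Order.TTheory GRing.Theory Num.Theory.
Import numFieldNormedType.Exports.
Local Open Scope classical_set_scope.
Local Open Scope ring_scope.

(* As the law of T has no atoms, F_T(max X X') - F_T(min X X') is the mass it
   gives to [min X X', max X X'[, so by Tonelli the expectation on the right is
   the integral, against the law of T, of t |-> P(min X X' <= t < max X X').
   That event is the disjoint union of {X <= t < X'} and {X' <= t < X}, of
   probability 2 F(t) (1 - F(t)) by independence and equality in law.  Finally
   Delta is the support of the law of T, whose complement is null.  All
   integrands are nonnegative. *)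

Section measure_support.
Variables (R : realType) (mu : {measure set R -> \bar R}).
Local Open Scope ereal_scope.

Lemma null_ball_notin_msupp (c r x : R) :
  mu (ball c r) = 0 -> ball c r x -> ~ msupp mu x.
Proof.
move=> mu0 cx; have cxr : (`|c - x| < r)%R by rewrite -ball_normE in cx.
move=> /(_ (r - `|c - x|)%R); rewrite subr_gt0 => /(_ cxr); apply/negP.
rewrite -leNgt -mu0 le_measure ?inE //; try exact: measurable_ball.
move=> y; rewrite -!ball_normE /= => xy.
by have := ler_distD x c y; lra.
Qed.

Let radius (k : nat) : R := k.+1%:R^-1.

(* The complement of the support is covered by the null balls with rational
   centre and radius 1/(k+1), enumerated through [unpickle]. *)
Let null_rat_ball (n : nat) : set R :=
  if (unpickle n : option (rat * nat)) is Some (q, k) then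
    if mu (ball (ratr q : R) (radius k)) == 0 then ball (ratr q : R) (radius k) else set0
  else set0.

Let notin_msupp_rat_ball (x : R) : ~ msupp mu x ->
  exists q k, mu (ball (ratr q : R) (radius k)) = 0 /\ ball (ratr q : R) (radius k) x.
Proof.
move=> /existsNP[e /not_implyP[e0 /negP]]; rewrite -leNgt => mue.
have [k _ /(_ k (leqnn k)) ke] := near_infty_natSinv_lt (PosNum (divr_gt0 e0 (ltr0Sn R 1))).
have rk0 : (0 < radius k)%R by rewrite invr_gt0.
have /rat_in_itvoo[q] : (x - radius k < x + radius k)%R by lra.
rewrite in_itv /= -ltr_distlC => xq; exists q, k.
split; last by rewrite -ball_normE /= distrC.
apply/eqP; rewrite eq_le measure_ge0 andbT.
apply: le_trans mue; rewrite le_measure ?inE //; try exact: measurable_ball.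
move=> y; rewrite -!ball_normE /= => qy.
apply: le_lt_trans (ler_distD (ratr q) x y) _; rewrite (splitr e).
by apply: ltrD; apply: lt_trans ke.
Qed.

Let msuppCE : ~` msupp mu = \bigcup_n null_rat_ball n.
Proof.
apply/seteqP; split=> x.
- move=> /notin_msupp_rat_ball[q [k [mu0 qx]]].
  by exists (pickle (q, k)); last rewrite /null_rat_ball pickleK mu0 eqxx.
- case=> n _; rewrite /null_rat_ball; case: unpickle => [[q k]|//].
  by case: ifPn => [/eqP mu0|//]; exact: null_ball_notin_msupp.
Qed.

Let measurable_null_rat_ball n : measurable (null_rat_ball n).
Proof.
rewrite /null_rat_ball; case: unpickle => [[q k]|//].
by case: ifP => // _; exact: measurable_ball.
Qed.

Let null_rat_ball0 n : mu (null_rat_ball n) = 0.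
Proof.
rewrite /null_rat_ball; case: unpickle => [[q k]|]; last exact: measure0.
by case: ifP => [/eqP//|_]; exact: measure0.
Qed.

Lemma msupp_measurable : measurable (msupp mu).
Proof.
rewrite -[msupp mu]setCK msuppCE; apply: measurableC.
exact: bigcupT_measurable.
Qed.

Lemma msuppC_null : mu (~` msupp mu) = 0.
Proof.
apply/negligibleP; first exact: measurableC msupp_measurable.
rewrite msuppCE; apply: negligible_bigcup => n.
by apply/negligibleP; [exact: measurable_null_rat_ball | exact: null_rat_ball0].
Qed.

Lemma ge0_integral_msupp (f : R -> \bar R) :
  measurable_fun setT f -> (forall x, 0 <= f x) ->
  \int[mu]_(x in msupp mu) f x = \int[mu]_x f x.
Proof.
move=> mf f0.
rewrite [RHS](ge0_negligible_integral _ _ _ _ msuppC_null) //.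
- by rewrite setTD setCK.
- exact: measurableC msupp_measurable.
Qed.

End measure_support.

Section atomless_measure.
Variables (R : realType) (mu : {finite_measure set R -> \bar R}).
Local Open Scope ereal_scope.
Hypothesis mu_set1 : forall x, mu [set x] = 0.

Lemma atomless_measure_itvNyo x : mu `]-oo, x[%classic = mu `]-oo, x]%classic.
Proof.
rewrite -(@setUitv1 _ _ (BInfty _ true) x true) ?bnd_simp // measureU //.
- by rewrite [X in _ + X](_ : _ = 0) ?addr0 //; exact: mu_set1.
- by apply/seteqP; split=> // y [/=]; rewrite in_itv /= => /[swap] ->; rewrite ltxx.
Qed.

Lemma atomless_measure_itvco a b : (a <= b)%R ->
  mu `[a, b[%classic = mu `]-oo, b]%classic - mu `]-oo, a]%classic.
Proof.
move=> ab; rewrite -!atomless_measure_itvNyo.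
rewrite (@itv_bndbnd_setU _ _ (BInfty _ true) (BLeft a) (BLeft b)) ?bnd_simp //.
rewrite measureU //; last first.
  apply/seteqP; split=> // y [/=]; rewrite !in_itv /= => ya /andP[ay _].
  by move: (lt_le_trans ya ay); rewrite ltxx.
rewrite addrAC subee ?add0r //.
by apply: fin_num_measure; exact: measurable_itv.
Qed.

End atomless_measure.

Lemma measurable_le_lt d (T : measurableType d) (R : realType) (f g h : T -> R) :
  measurable_fun setT f -> measurable_fun setT g -> measurable_fun setT h ->
  measurable [set x | f x <= g x < h x].
Proof.
move=> mf mg mh.
have := measurable_and (measurable_fun_ler mf mg) (measurable_fun_ltr mg mh).
by move=> /(_ measurableT [set true] I); rewrite setTI.
Qed.

Lemma min_le_lt_maxE (T : Type) (R : realType) (f g : T -> R) (t : R) :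
  [set x | Num.min (f x) (g x) <= t < Num.max (f x) (g x)] =
  (f @^-1` `]-oo, t] `&` g @^-1` (~` `]-oo, t])) `|`
  (f @^-1` (~` `]-oo, t]) `&` g @^-1` `]-oo, t]).
Proof.
apply/seteqP; split=> x /=; rewrite !in_itv /= ge_min lt_max;
  case: (leP (f x) t); case: (leP (g x) t) => //= _ _;
  by [move=> _; left | move=> _; right | case=> -[]].
Qed.

Section rcdf.
Context d (Omega : measurableType d) (R : realType) (P : probability Omega R).
Local Open Scope ereal_scope.

Lemma distribution_itvNyc (X : {RV P >-> R}) t :
  distribution P X `]-oo, t]%classic = (rcdf X t)%:E.
Proof. by rewrite /rcdf /cdf fineK // fin_num_measure. Qed.

Lemma rcdf_ge0 (X : {RV P >-> R}) t : (0 <= rcdf X t)%R.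
Proof. by rewrite -lee_fin -distribution_itvNyc. Qed.

Lemma rcdf_le1 (X : {RV P >-> R}) t : (rcdf X t <= 1)%R.
Proof. by rewrite -lee_fin -distribution_itvNyc probability_le1. Qed.

Lemma measurable_rcdf (X : {RV P >-> R}) : measurable_fun setT (rcdf X).
Proof. exact: measurableT_comp (fine_measurable measurableT) (cdf_measurable X). Qed.

Lemma distribution_itvco (T : {RV P >-> R}) a b : (a <= b)%R ->
  distribution P T `<< lebesgue_measure ->
  distribution P T `[a, b[%classic = (rcdf T b - rcdf T a)%:E.
Proof.
move=> ab Tac; rewrite atomless_measure_itvco //.
  by rewrite EFinB -!distribution_itvNyc.
move=> x; apply: (proj1 (null_content_dominatesP _ _) Tac) => //.
exact: lebesgue_measure_set1.
Qed.

Lemma probability_min_le_lt_max (X X' : {RV P >-> R}) t :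
  indep2 X X' -> same_law X X' ->
  P [set w | (Num.min (X w) (X' w) <= t < Num.max (X w) (X' w))%R] =
  (2 * (rcdf X t * (1 - rcdf X t)))%:E.
Proof.
move=> XX' lawXX'; rewrite min_le_lt_maxE.
set I := `]-oo, t]%classic; have mI : measurable I by exact: measurable_itv.
have mIC := measurableC mI.
have mX := measurable_funPTI X; have mX' := measurable_funPTI X'.
have -> : P ((X @^-1` I `&` X' @^-1` (~` I)) `|` (X @^-1` (~` I) `&` X' @^-1` I)) =
    P (X @^-1` I `&` X' @^-1` (~` I)) + P (X @^-1` (~` I) `&` X' @^-1` I).
  rewrite measureU //.
  - by apply: measurableI; [exact: mX | exact: mX'].
  - by apply: measurableI; [exact: mX | exact: mX'].
  - by apply/seteqP; split=> // w [[XI _] [/(_ XI)]].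
rewrite !XX' // -!lawXX' // !preimage_setC !probability_setC //; last exact: mX mI.
rewrite -[P _]/(distribution P X _) distribution_itvNyc.
by rewrite -!EFinB -!EFinM -EFinD; congr EFin; ring.
Qed.

Lemma expectation_rcdfB (T : {RV P >-> R}) (Y Z : Omega -> R) :
  distribution P T `<< lebesgue_measure ->
  measurable_fun setT Y -> measurable_fun setT Z -> (forall w, Y w <= Z w)%R ->
  'E_P[fun w => (rcdf T (Z w) - rcdf T (Y w))%R] =
  \int[distribution P T]_t P [set w | (Y w <= t < Z w)%R].
Proof.
move=> Tac mY mZ YZ.
pose S := [set z : Omega * R | (Y z.1 <= z.2 < Z z.1)%R].
have mS : measurable S.
  by apply: measurable_le_lt; [exact: measurableT_comp mY measurable_fst |
    exact: measurable_snd | exact: measurableT_comp mZ measurable_fst].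
have m1S : measurable_fun setT (fun z => (\1_S z)%:E : \bar R).
  exact/measurable_EFinP/measurable_indic.
transitivity (\int[P]_w \int[distribution P T]_t (\1_S (w, t))%:E).
  rewrite unlock; apply: eq_integral => w _.
  by rewrite -distribution_itvco // -(setIT `[Y w, Z w[%classic) -integral_indic.
rewrite (fubini_tonelli (fun z => (\1_S z)%:E) m1S); last by move=> z; rewrite lee_fin.
apply: eq_integral => t _.
rewrite -(setIT [set w | (Y w <= t < Z w)%R]) -integral_indic //.
exact: measurable_le_lt mY (measurable_cst t) mZ.
Qed.

End rcdf.

Theorem proposition12 (d : measure_display) (Omega : measurableType d)
  (R : realType) (P : probability Omega R) (X X' T : {RV P >-> R}) :
  nondegenerate_rv X ->
  indep2 X X' -> same_law X X' ->
  ('E_P[fun w => Num.min (X w) (X' w)] \is a fin_num)%E ->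
  ('E_P[fun w => Num.max (X w) (X' w)] \is a fin_num)%E ->
  distribution P T `<< (@lebesgue_measure R) ->
  msupp (distribution P T) = msupp (distribution P X) ->
  Ghat (fun u => u) (fun u => u) X T =
  ((2^-1)%:E *
   'E_P[fun w => (rcdf T (Num.max (X w) (X' w)) - rcdf T (Num.min (X w) (X' w)))%R])%E.
Proof.
move=> _ XX' lawXX' _ _ Tac suppTX.
have mX : measurable_fun setT X by exact: measurable_funP.
have mX' : measurable_fun setT X' by exact: measurable_funP.
have FX_ge0 t : (0 <= (rcdf X t * (1 - rcdf X t))%:E)%E.
  by rewrite lee_fin mulr_ge0 ?rcdf_ge0 // subr_ge0 rcdf_le1.
have mFX : measurable_fun setT (fun t => (rcdf X t * (1 - rcdf X t))%:E).
  apply/measurable_EFinP/measurable_funM; first exact: measurable_rcdf.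
  by apply: measurable_funB => //; exact: measurable_rcdf.
rewrite expectation_rcdfB //; first last.
- by move=> w; rewrite ge_min le_max lexx.
- exact: measurable_maxr.
- exact: measurable_minr.
under eq_integral do rewrite probability_min_le_lt_max // EFinM.
rewrite ge0_integralZl // muleA -EFinM mulVf // mul1e.
by rewrite /Ghat /gDelta -suppTX setIid ge0_integral_msupp.
Qed.
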